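(* Let $(C,\delta,P)$ be a chain complex with involution over $\mathbb{Z}_D$. Let $\mathcal{V}\le C$ be a subspace and $\mathcal{V}^>$ a direct complement of it, and let $W,W^>:C\to C$ be the projections onto $\mathcal{V}$ and $\mathcal{V}^>$ corresponding to the decomposition $C=\mathcal{V}\oplus\mathcal{V}^>$. Suppose $PW=WP$. Let $S^>=W\delta(\mathcal{V}^>)$, $\mathcal{V}'=\mathcal{V}/S^>$, and define $\varphi:C\to\mathcal{V}'$ by $\varphi(h)=Wh+S^>$. Then the maps $\delta',P':\mathcal{V}'\to\mathcal{V}'$ given by $\delta'(x+S^>)=\varphi(\delta(x))$ and $P'(x+S^>)=\varphi(P(x))$ (for $x\in\mathcal{V}$) are well defined, $(\mathcal{V}',\delta',P')$ is a chain complex with involution, and $\varphi$ is a chain map ($\delta'\varphi=\varphi\delta$) satisfying $\varphi P=P'\varphi$. Moreover, $\ker\delta'=\varphi(\delta^{-1}(\mathcal{V}^>))$ and $\operatorname{im}\delta'=\varphi(\operatorname{im}\delta)$.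
   Context: $D$ is an odd prime and $\mathbb{Z}_D$ the field with $D$ elements. A chain complex with involution over $\mathbb{Z}_D$ is a triple $(C,\partial,P)$ where $C$ is a $\mathbb{Z}_D$-vector space and $\partial,P:C\to C$ are linear maps with $\partial^2=0$, $P^2=I$ and $\partial P+P\partial=0$. $\delta^{-1}(\mathcal{V}^>)$ denotes the preimage $\{x\in C:\delta x\in\mathcal{V}^>\}$. *)

From HB Require Import structures.
From mathcomp Require Import all_boot all_order all_algebra.
Set Implicit Arguments. Unset Strict Implicit. Unset Printing Implicit Defensive.
Import GRing.Theory.
Local Open Scope ring_scope.

Definition is_subspace (K : nzRingType) (C : lmodType K) (U : {pred C}) : Prop :=
  (0 \in U) /\ (forall (a : K) (x y : C), x \in U -> y \in U -> a *: x + y \in U).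

Definition direct_complement (K : nzRingType) (C : lmodType K) (U1 U2 : {pred C}) : Prop :=
  is_subspace U1 /\ is_subspace U2 /\
  (forall x, x \in U1 -> x \in U2 -> x = 0) /\
  (forall c : C, exists u1 u2, u1 \in U1 /\ u2 \in U2 /\ c = u1 + u2).

Definition chain_complex_inv (K : nzRingType) (C : lmodType K) (d P : C -> C) : Prop :=
  linear d /\ linear P /\
  (forall x, d (d x) = 0) /\
  (forall x, P (P x) = x) /\
  (forall x, d (P x) + P (d x) = 0).

From HB Require Import structures.
From mathcomp Require Import all_boot all_order all_algebra.
Set Implicit Arguments. Unset Strict Implicit. Unset Printing Implicit Defensive.
Import GRing.Theory.
Local Open Scope ring_scope.

(* The map phi = q o W kills V^> and W d(V^>), hence also d(V^>), since
   d v = W d v + W^> d v.  So every linear f for which phi o f kills V^> and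
   d(V^>) descends along phi to a map on V' = V / W d(V^>).  Both d and P
   qualify: P preserves V^> because it commutes with W, and P d = - d P.
   Since phi is onto and intertwines d, P with the descended maps, the
   chain-complex identities and the image of d' are transported along phi. *)

Section LinearMaps.
Variables (K : pzRingType) (U V : lmodType K) (f : U -> V).
Hypothesis hf : linear f.

Lemma linB x y : f (x - y) = f x - f y.
Proof. exact: zmod_morphism_linear. Qed.

Lemma lin0 : f 0 = 0.
Proof. by rewrite -[0 in LHS](subrr 0) linB subrr. Qed.

Lemma linN x : f (- x) = - f x.
Proof. by rewrite -sub0r linB lin0 sub0r. Qed.

Lemma linD x y : f (x + y) = f x + f y.
Proof. by rewrite -[y in LHS]opprK linB linN opprK. Qed.

Lemma linZ a x : f (a *: x) = a *: f x.
Proof. by rewrite -[a *: x]addr0 hf lin0 addr0. Qed.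

End LinearMaps.

Section Subspaces.
Variables (K : nzRingType) (C : lmodType K) (U : {pred C}).
Hypothesis hU : is_subspace U.

Lemma subspace0 : 0 \in U.
Proof. by case: hU. Qed.

Lemma subspaceD x y : x \in U -> y \in U -> x + y \in U.
Proof. by case: hU => _ hlin xU yU; rewrite -[x]scale1r; apply: hlin. Qed.

Lemma subspaceZ a x : x \in U -> a *: x \in U.
Proof. by move=> xU; rewrite -[_ *: _]addr0; case: hU => h0 hlin; apply: hlin. Qed.

Lemma subspaceN x : x \in U -> - x \in U.
Proof. by move=> xU; rewrite -scaleN1r subspaceZ. Qed.

Lemma subspaceB x y : x \in U -> y \in U -> x - y \in U.
Proof. by move=> xU yU; rewrite subspaceD ?subspaceN. Qed.

End Subspaces.

Section Projection.
Variables (K : nzRingType) (C : lmodType K) (V Vc : {pred C}) (W Wc : C -> C).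
Hypothesis hV : direct_complement V Vc.
Hypotheses (hW : forall c, W c \in V) (hWc : forall c, Wc c \in Vc).
Hypothesis hWWc : forall c, c = W c + Wc c.

Let sV : is_subspace V := hV.1.
Let sVc : is_subspace Vc := hV.2.1.
Let hcap : forall x, x \in V -> x \in Vc -> x = 0 := hV.2.2.1.

Lemma proj_unique x y z : y \in V -> z \in Vc -> x = y + z -> W x = y.
Proof.
move=> yV zVc exyz; apply/eqP; rewrite -subr_eq0; apply/eqP/hcap.
  by rewrite subspaceB.
have -> : W x - y = z - Wc x.
  by apply/eqP; rewrite subr_eq addrAC [z + y]addrC -exyz {2}(hWWc x) addrK.
by rewrite subspaceB.
Qed.

Lemma proj_id x : x \in V -> W x = x.
Proof. by move=> xV; apply: proj_unique xV (subspace0 sVc) _; rewrite addr0. Qed.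

Lemma proj_eq0 x : x \in Vc -> W x = 0.
Proof. by move=> xVc; apply: proj_unique (subspace0 sV) xVc _; rewrite add0r. Qed.

Lemma proj_eq0_mem x : W x = 0 -> x \in Vc.
Proof. by move=> Wx0; rewrite (hWWc x) Wx0 add0r. Qed.

Lemma linear_proj : linear W.
Proof.
move=> a u v; apply: (proj_unique (z := a *: Wc u + Wc v)).
- by rewrite subspaceD ?subspaceZ.
- by rewrite subspaceD ?subspaceZ.
- by rewrite addrACA -scalerDr -!hWWc.
Qed.

Lemma commute_proj_Vc (f : C -> C) : linear f ->
  (forall c, f (W c) = W (f c)) -> forall v, v \in Vc -> f v \in Vc.
Proof.
by move=> hf hfW v vVc; apply: proj_eq0_mem; rewrite -hfW proj_eq0 // lin0.
Qed.

End Projection.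

Section ChainComplexImage.
Variables (K : nzRingType) (C Q : lmodType K) (d P : C -> C) (d' P' : Q -> Q).
Variable phi : C -> Q.
Hypotheses (hphi : linear phi) (phi_surj : forall y, exists h, y = phi h).
Hypothesis d'_phi : forall h, d' (phi h) = phi (d h).
Hypothesis P'_phi : forall h, P' (phi h) = phi (P h).

Lemma chain_complex_inv_image :
  linear d' -> linear P' -> chain_complex_inv d P -> chain_complex_inv d' P'.
Proof.
move=> hd' hP' [_ [_ [hdd [hPP hdP]]]]; do 2!split=> //.
split; last split; move=> y; have [h ->] := phi_surj y.
- by rewrite !d'_phi hdd (lin0 hphi).
- by rewrite !P'_phi hPP.
- by rewrite P'_phi d'_phi d'_phi P'_phi -(linD hphi) hdP (lin0 hphi).
Qed.

Lemma range_intertwined y : (exists z, y = d' z) <-> exists h, y = phi (d h).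
Proof.
split=> [[z ->] | [h ->]]; last by exists (phi h).
by have [h ->] := phi_surj z; exists h.
Qed.

End ChainComplexImage.

Section Reduction.
Variables (K : nzRingType) (C : lmodType K) (d P : C -> C).
Hypothesis hC : chain_complex_inv d P.
Variables (V Vc : {pred C}) (W Wc : C -> C).
Hypothesis hV : direct_complement V Vc.
Hypotheses (hW : forall c, W c \in V) (hWc : forall c, Wc c \in Vc).
Hypothesis hWWc : forall c, c = W c + Wc c.
Hypothesis hPW : forall c, P (W c) = W (P c).
Variables (Q : lmodType K) (q : C -> Q).
Hypothesis hq : linear q.
Hypothesis hq_surj : forall y : Q, exists x, x \in V /\ q x = y.
Hypothesis hq_ker :
  forall x, x \in V -> (q x = 0 <-> exists v, v \in Vc /\ x = W (d v)).

Definition phi (h : C) : Q := q (W h).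

Let hd : linear d := hC.1.
Let hP : linear P := hC.2.1.
Let hdd : forall x, d (d x) = 0 := hC.2.2.1.
Let hdP : forall x, d (P x) + P (d x) = 0 := hC.2.2.2.2.
Let sV : is_subspace V := hV.1.
Let hWl : linear W := linear_proj hV hW hWc hWWc.
Let W_id := proj_id hV hW hWc hWWc.
Let W_Vc := proj_eq0 hV hW hWc hWWc.

Lemma linear_phi : linear phi.
Proof. by move=> a x y; rewrite /phi hWl hq. Qed.

Lemma phi_W h : phi (W h) = phi h.
Proof. by rewrite /phi W_id. Qed.

Lemma phi_id x : x \in V -> phi x = q x.
Proof. by move=> xV; rewrite /phi (W_id xV). Qed.

Let lift_spec y : exists x, (x \in V) && (q x == y).
Proof. by have [x [xV <-]] := hq_surj y; exists x; rewrite xV eqxx. Qed.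

Definition lift (y : Q) : C := xchoose (lift_spec y).

Lemma lift_mem y : lift y \in V.
Proof. by have /andP[] := xchooseP (lift_spec y). Qed.

Lemma q_lift y : q (lift y) = y.
Proof. by have /andP[_ /eqP] := xchooseP (lift_spec y). Qed.

Lemma phi_lift y : phi (lift y) = y.
Proof. by rewrite phi_id ?q_lift ?lift_mem. Qed.

Lemma phi_surj y : exists h, y = phi h.
Proof. by exists (lift y); rewrite phi_lift. Qed.

Lemma phi_Vc v : v \in Vc -> phi v = 0.
Proof. by move=> vVc; rewrite /phi (W_Vc vVc) lin0. Qed.

Lemma phi_d_Vc v : v \in Vc -> phi (d v) = 0.
Proof. by move=> vVc; apply/(hq_ker (hW _)); exists v. Qed.

Lemma phi_ker x : x \in V -> phi x = 0 -> exists v, v \in Vc /\ x = W (d v).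
Proof. by move=> xV; rewrite phi_id // => /(hq_ker xV). Qed.

Lemma P_Vc v : v \in Vc -> P v \in Vc.
Proof. exact: (commute_proj_Vc hV hW hWc hWWc hP hPW). Qed.

Definition descend (f : C -> C) (y : Q) : Q := phi (f (lift y)).

Section Descend.
Variable f : C -> C.
Hypothesis hf : linear f.
Hypothesis phi_f_Vc : forall v, v \in Vc -> phi (f v) = 0.
Hypothesis phi_f_d_Vc : forall v, v \in Vc -> phi (f (d v)) = 0.

Let phi_f_W h : phi (f (W h)) = phi (f h).
Proof.
by rewrite [in RHS](hWWc h) (linD hf) (linD linear_phi) (phi_f_Vc (hWc h)) addr0.
Qed.

Lemma descend_phi h : descend f (phi h) = phi (f h).
Proof.
have [v [vVc ev]] : exists v, v \in Vc /\ lift (phi h) - W h = W (d v).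
  apply: phi_ker; first by rewrite subspaceB ?lift_mem.
  by rewrite (linB linear_phi) phi_lift phi_W subrr.
rewrite /descend (_ : lift (phi h) = W h + W (d v)); last by rewrite -ev addrC subrK.
by rewrite (linD hf) (linD linear_phi) !phi_f_W phi_f_d_Vc // addr0.
Qed.

Lemma linear_descend : linear (descend f).
Proof.
move=> a y z; rewrite -{1}(phi_lift y) -{1}(phi_lift z) -(linZ linear_phi).
by rewrite -(linD linear_phi) descend_phi hf linear_phi.
Qed.

End Descend.

Lemma phi_d_d_Vc v : v \in Vc -> phi (d (d v)) = 0.
Proof. by rewrite hdd (lin0 linear_phi). Qed.

Lemma phi_P_d_Vc v : v \in Vc -> phi (P (d v)) = 0.
Proof.
move=> vVc; have -> : P (d v) = - d (P v) by apply/eqP; rewrite -addr_eq0 addrC hdP.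
by rewrite (linN linear_phi) phi_d_Vc ?oppr0 ?P_Vc.
Qed.

Lemma phi_P_Vc v : v \in Vc -> phi (P v) = 0.
Proof. by move=> vVc; rewrite phi_Vc ?P_Vc. Qed.

Lemma descend_d_phi h : descend d (phi h) = phi (d h).
Proof. exact: descend_phi hd phi_d_Vc phi_d_d_Vc h. Qed.

Lemma descend_P_phi h : descend P (phi h) = phi (P h).
Proof. exact: descend_phi hP phi_P_Vc phi_P_d_Vc h. Qed.

Lemma descend_d_eq0 y : descend d y = 0 <-> exists h, d h \in Vc /\ y = phi h.
Proof.
split=> [|[h [dhVc ->]]]; last by rewrite descend_d_phi phi_Vc.
rewrite -{1}(phi_lift y) descend_d_phi -phi_W => /(phi_ker (hW _)) [v [vVc ev]].
exists (lift y - v); split; last by rewrite (linB linear_phi) (phi_Vc vVc) subr0 phi_lift.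
apply: (proj_eq0_mem hWc hWWc).
by rewrite (linB hd) (linB hWl) ev subrr.
Qed.

Lemma descend_chain_complex_inv : chain_complex_inv (descend d) (descend P).
Proof.
apply: (chain_complex_inv_image linear_phi phi_surj descend_d_phi descend_P_phi) => //.
- exact: linear_descend hd phi_d_Vc phi_d_d_Vc.
- exact: linear_descend hP phi_P_Vc phi_P_d_Vc.
Qed.

End Reduction.

Theorem lemma2 (D : nat) (hD : prime D) (hodd : odd D)
  (C : lmodType 'F_D) (d P : C -> C) (hC : chain_complex_inv d P)
  (V Vc : {pred C}) (hV : direct_complement V Vc)
  (W Wc : C -> C)
  (hW : forall c, W c \in V) (hWc : forall c, Wc c \in Vc)
  (hWWc : forall c, c = W c + Wc c)
  (hPW : forall c, P (W c) = W (P c))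
  (* V' = V / S, where S = W d(Vc): realised by any quotient map q : V ->> Q
     with kernel S (q is only used on V) *)
  (Q : lmodType 'F_D) (q : C -> Q) (hq : linear q)
  (hq_surj : forall y : Q, exists x, x \in V /\ q x = y)
  (hq_ker : forall x, x \in V -> (q x = 0 <-> exists v, v \in Vc /\ x = W (d v))) :
  (* phi h = q (W h) *)
  exists d' P' : Q -> Q,
    (forall x, x \in V -> d' (q x) = q (W (d x))) /\
    (forall x, x \in V -> P' (q x) = q (W (P x))) /\
    chain_complex_inv d' P' /\
    (forall h, d' (q (W h)) = q (W (d h))) /\
    (forall h, q (W (P h)) = P' (q (W h))) /\
    (forall y : Q, d' y = 0 <-> exists h, d h \in Vc /\ y = q (W h)) /\
    (forall y : Q, (exists z, y = d' z) <-> exists h, y = q (W (d h))).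
Proof.
have phi_V := phi_id hV hW hWc hWWc q.
have d'_phi := descend_d_phi hC hV hW hWc hWWc hq hq_surj hq_ker.
have P'_phi := descend_P_phi hC hV hW hWc hWWc hPW hq hq_surj hq_ker.
exists (descend W hq_surj d), (descend W hq_surj P).
split; first by move=> x xV; rewrite -phi_V ?d'_phi.
split; first by move=> x xV; rewrite -phi_V ?P'_phi.
split; first exact: (descend_chain_complex_inv hC hV hW hWc hWWc hPW hq hq_surj hq_ker).
split; first exact: d'_phi.
split; first by move=> h; rewrite P'_phi.
split; first exact: (descend_d_eq0 hC hV hW hWc hWWc hq hq_surj hq_ker).
exact: range_intertwined (phi_surj hV hW hWc hWWc hq_surj) d'_phi.
Qed.
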